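(* Let $n_1,n_1',n_2,n_2'\in\mathbb{N}$. For $i=1,2$ let $\phi_i:\mathbb{N}^{n_i}\to\mathbb{N}^{n_i'}$ be monotonic maps that change the Stanley depth by $\ell_i$ with respect to $g_i\in\mathbb{N}^{n_i}$ and $g_i'\in\mathbb{N}^{n_i'}$. Then the product map $(\phi_1,\phi_2):\mathbb{N}^{n_1+n_2}\to\mathbb{N}^{n_1'+n_2'}$, $(a,b)\mapsto(\phi_1(a),\phi_2(b))$, changes the Stanley depth by $\ell_1+\ell_2$ with respect to $(g_1,g_2)$ and $(g_1',g_2')$.
   Context: $\mathbb{N}^n$ carries the componentwise partial order; $[a,b]=\{c: a\le c\le b\}$; a map is monotonic if it preserves this order. A monotonic map $\phi:\mathbb{N}^n\to\mathbb{N}^{n'}$ changes the Stanley depth by $\ell\in\mathbb{Z}$ with respect to $g\in\mathbb{N}^n$ and $g'\in\mathbb{N}^{n'}$ if (1) $\phi(g)\le g'$, and (2) for every interval $[a',b']\subset[0,g']$, the set $\phi^{-1}([a',b'])\cap[0,g]$ is a finite disjoint union $\bigcup_i[a^i,b^i]$ of intervals with $\#\{j\in[n]: b^i_j=g_j\}\ge\#\{j\in[n']: b'_j=g'_j\}+\ell$ for all $i$. *)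

From mathcomp Require Import all_boot all_order all_algebra.
Set Implicit Arguments. Unset Strict Implicit. Unset Printing Implicit Defensive.

Definition vec (n : nat) := 'I_n -> nat.

Definition vle n (a b : vec n) : Prop := forall i, a i <= b i.

Definition vzero n : vec n := fun _ => 0.

Definition in_interval n (a b c : vec n) : Prop := vle a c /\ vle c b.

Definition monotonic n n' (phi : vec n -> vec n') : Prop :=
  forall a b, vle a b -> vle (phi a) (phi b).

Definition nb_eq n (b g : vec n) : nat := #|[pred j : 'I_n | b j == g j]|.

Definition changes_sdepth n n' (phi : vec n -> vec n') (l : int)
    (g : vec n) (g' : vec n') : Prop :=
  vle (phi g) g' /\
  forall a' b' : vec n',
    (forall c, in_interval a' b' c -> in_interval (@vzero n') g' c) ->
    exists I : seq (vec n * vec n),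
      (forall x : vec n,
          (in_interval (@vzero n) g x /\ in_interval a' b' (phi x)) <->
          (exists2 i, i < size I & in_interval (nth (@vzero n, @vzero n) I i).1
                                             (nth (@vzero n, @vzero n) I i).2 x)) /\
      (forall i j x, i < size I -> j < size I -> i != j ->
          in_interval (nth (@vzero n, @vzero n) I i).1 (nth (@vzero n, @vzero n) I i).2 x ->
          in_interval (nth (@vzero n, @vzero n) I j).1 (nth (@vzero n, @vzero n) I j).2 x ->
          False) /\
      (forall i, i < size I ->
          ((nb_eq (nth (@vzero n, @vzero n) I i).2 g)%:Z >= (nb_eq b' g')%:Z + l)%R).

Definition vcat n1 n2 (a : vec n1) (b : vec n2) : vec (n1 + n2) :=
  fun i => match split i with inl j => a j | inr k => b k end.
Definition vfst n1 n2 (x : vec (n1 + n2)) : vec n1 := fun j => x (lshift n2 j).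
Definition vsnd n1 n2 (x : vec (n1 + n2)) : vec n2 := fun k => x (rshift n1 k).

Definition prod_map n1 n1' n2 n2' (phi1 : vec n1 -> vec n1') (phi2 : vec n2 -> vec n2')
  : vec (n1 + n2) -> vec (n1' + n2') :=
  fun x => vcat (phi1 (@vfst n1 n2 x)) (phi2 (@vsnd n1 n2 x)).

(* A product of two intervals of N^n1 and N^n2 is an interval of N^(n1+n2), and
   membership, the order and the count of coordinates where an upper end meets g
   all split along the two blocks of coordinates. Hence the preimage of
   [a',b'] under (phi1, phi2) is the product of the preimages of its two
   projections, the pairwise products of the two disjoint decompositions
   decompose it disjointly, and the depth bounds l1, l2 add up. *)
From mathcomp Require Import all_boot all_order all_algebra.
From Stdlib Require Import Setoid FunctionalExtensionality.

Set Implicit Arguments.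
Unset Strict Implicit.
Unset Printing Implicit Defensive.

Import Order.TTheory GRing.Theory Num.Theory.

Section Concatenation.
Variables n1 n2 : nat.

Lemma vfst_vcat (a : vec n1) (b : vec n2) : vfst (vcat a b) = a.
Proof.
by apply: functional_extensionality => j; rewrite /vfst /vcat (unsplitK (inl _)).
Qed.

Lemma vsnd_vcat (a : vec n1) (b : vec n2) : vsnd (vcat a b) = b.
Proof.
by apply: functional_extensionality => k; rewrite /vsnd /vcat (unsplitK (inr _)).
Qed.

Lemma vle_split (x y : vec (n1 + n2)) :
  vle x y <-> vle (vfst x) (vfst y) /\ vle (vsnd x) (vsnd y).
Proof.
split=> [le_xy | [le1 le2] i]; first by split=> i; apply: le_xy.
case: (splitP i) => j eq_ij.
  by rewrite (_ : i = lshift n2 j); [exact: le1 | exact: val_inj].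
by rewrite (_ : i = rshift n1 j); [exact: le2 | exact: val_inj].
Qed.

Lemma in_interval_split (a b x : vec (n1 + n2)) :
  in_interval a b x <->
  in_interval (vfst a) (vfst b) (vfst x) /\ in_interval (vsnd a) (vsnd b) (vsnd x).
Proof. by rewrite /in_interval !vle_split; tauto. Qed.

Lemma nb_eq_split (b g : vec (n1 + n2)) :
  nb_eq b g = nb_eq (vfst b) (vfst g) + nb_eq (vsnd b) (vsnd g).
Proof. by rewrite /nb_eq -!sum1_card big_split_ord. Qed.

Lemma in_interval_fst_sub (a b c d : vec (n1 + n2)) :
  vle (vsnd a) (vsnd b) ->
  (forall x, in_interval a b x -> in_interval c d x) ->
  forall x, in_interval (vfst a) (vfst b) x -> in_interval (vfst c) (vfst d) x.
Proof.
move=> le_snd sub_ab x ab_x.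
have /sub_ab/in_interval_split[] : in_interval a b (vcat x (vsnd a)).
  by apply/in_interval_split; rewrite vfst_vcat vsnd_vcat; split=> //; split=> // i.
by rewrite vfst_vcat.
Qed.

Lemma in_interval_snd_sub (a b c d : vec (n1 + n2)) :
  vle (vfst a) (vfst b) ->
  (forall x, in_interval a b x -> in_interval c d x) ->
  forall x, in_interval (vsnd a) (vsnd b) x -> in_interval (vsnd c) (vsnd d) x.
Proof.
move=> le_fst sub_ab x ab_x.
have /sub_ab/in_interval_split[] : in_interval a b (vcat (vfst a) x).
  by apply/in_interval_split; rewrite vfst_vcat vsnd_vcat; split=> //; split=> // i.
by rewrite vsnd_vcat.
Qed.

End Concatenation.

Section PairIndex.
Variables s1 s2 : nat.

Lemma pair_index_ltn i j : i < s1 -> j < s2 -> i * s2 + j < s1 * s2.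
Proof.
move=> lt_i lt_j; have s2_gt0 : 0 < s2 by case: (s2) lt_j.
by rewrite -ltn_divLR // divnMDl // divn_small // addn0.
Qed.

Lemma divn_pair_index i j : j < s2 -> (i * s2 + j) %/ s2 = i.
Proof.
by move=> lt_j; rewrite divnMDl ?divn_small ?addn0 //; case: (s2) lt_j.
Qed.

Lemma modn_pair_index i j : j < s2 -> (i * s2 + j) %% s2 = j.
Proof. by move=> lt_j; rewrite modnMDl modn_small. Qed.

Lemma pair_index_bounds k : k < s1 * s2 -> k %/ s2 < s1 /\ k %% s2 < s2.
Proof.
move=> lt_k; have s2_gt0 : 0 < s2 by case: (s2) lt_k => [|//]; rewrite muln0.
by rewrite ltn_divLR // ltn_pmod.
Qed.

End PairIndex.

Definition nth_interval n (I : seq (vec n * vec n)) i := nth (@vzero n, @vzero n) I i.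

Definition in_nth_interval n (I : seq (vec n * vec n)) i (x : vec n) :=
  in_interval (nth_interval I i).1 (nth_interval I i).2 x.

Definition interval_union n (S : vec n -> Prop) (I : seq (vec n * vec n)) :=
  forall x, S x <-> exists2 i, i < size I & in_nth_interval I i x.

Definition disjoint_intervals n (I : seq (vec n * vec n)) :=
  forall i j x, i < size I -> j < size I -> i != j ->
    in_nth_interval I i x -> in_nth_interval I j x -> False.

Definition upper_ends_depth_ge n (I : seq (vec n * vec n)) (g : vec n) (d : int) :=
  forall i, i < size I -> (d <= (nb_eq (nth_interval I i).2 g)%:Z)%R.

Section IntervalProduct.
Variables n1 n2 : nat.
Variables (I1 : seq (vec n1 * vec n1)) (I2 : seq (vec n2 * vec n2)).

Definition interval_cat (p : vec n1 * vec n1) (q : vec n2 * vec n2) :=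
  (vcat p.1 q.1, vcat p.2 q.2).

(* The interval with index [i * size I2 + j] is the product of the [i]-th
   interval of [I1] and the [j]-th interval of [I2]. *)
Definition interval_prod :=
  mkseq (fun k => interval_cat (nth_interval I1 (k %/ size I2))
                               (nth_interval I2 (k %% size I2)))
        (size I1 * size I2).

Lemma size_interval_prod : size interval_prod = size I1 * size I2.
Proof. exact: size_mkseq. Qed.

Lemma nth_interval_prod k : k < size I1 * size I2 ->
  nth_interval interval_prod k =
  interval_cat (nth_interval I1 (k %/ size I2)) (nth_interval I2 (k %% size I2)).
Proof. exact: nth_mkseq. Qed.

Lemma in_nth_interval_prod k x : k < size I1 * size I2 ->
  in_nth_interval interval_prod k x <->
  in_nth_interval I1 (k %/ size I2) (vfst x) /\
  in_nth_interval I2 (k %% size I2) (vsnd x).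
Proof.
move=> lt_k; rewrite /in_nth_interval nth_interval_prod // in_interval_split.
by rewrite !vfst_vcat !vsnd_vcat.
Qed.

Lemma interval_union_prod (S1 : vec n1 -> Prop) (S2 : vec n2 -> Prop)
    (S : vec (n1 + n2) -> Prop) :
  (forall x, S x <-> S1 (vfst x) /\ S2 (vsnd x)) ->
  interval_union S1 I1 -> interval_union S2 I2 -> interval_union S interval_prod.
Proof.
move=> S_prod union1 union2 x; rewrite S_prod union1 union2 size_interval_prod.
split=> [[[i lt_i in_i] [j lt_j in_j]] | [k lt_k /(in_nth_interval_prod _ lt_k)]].
  exists (i * size I2 + j); first exact: pair_index_ltn.
  by apply/in_nth_interval_prod; rewrite ?pair_index_ltn ?divn_pair_index
                                          ?modn_pair_index.
have [lt_div lt_mod] := pair_index_bounds lt_k.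
by case=> in1 in2; split; [exists (k %/ size I2) | exists (k %% size I2)].
Qed.

Lemma disjoint_intervals_prod :
  disjoint_intervals I1 -> disjoint_intervals I2 -> disjoint_intervals interval_prod.
Proof.
move=> disj1 disj2 k k' x; rewrite size_interval_prod => lt_k lt_k' neq_kk'.
move=> /(in_nth_interval_prod _ lt_k)[in1 in2] /(in_nth_interval_prod _ lt_k')[in1' in2'].
have [lt_div lt_mod] := pair_index_bounds lt_k.
have [lt_div' lt_mod'] := pair_index_bounds lt_k'.
have [eq_div|neq_div] := eqVneq (k %/ size I2) (k' %/ size I2); last first.
  exact: disj1 lt_div lt_div' neq_div in1 in1'.
have [eq_mod|neq_mod] := eqVneq (k %% size I2) (k' %% size I2); last first.
  exact: disj2 lt_mod lt_mod' neq_mod in2 in2'.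
move/eqP: neq_kk'; apply.
by rewrite (divn_eq k (size I2)) (divn_eq k' (size I2)) eq_div eq_mod.
Qed.

Lemma upper_ends_depth_ge_prod (g1 : vec n1) (g2 : vec n2) (d1 d2 : int) :
  upper_ends_depth_ge I1 g1 d1 -> upper_ends_depth_ge I2 g2 d2 ->
  upper_ends_depth_ge interval_prod (vcat g1 g2) (d1 + d2)%R.
Proof.
move=> depth1 depth2 k; rewrite size_interval_prod => lt_k.
have [lt_div lt_mod] := pair_index_bounds lt_k.
rewrite nth_interval_prod // nb_eq_split !vfst_vcat !vsnd_vcat PoszD.
exact: lerD (depth1 _ lt_div) (depth2 _ lt_mod).
Qed.

End IntervalProduct.

Lemma interval_union_nil n (S : vec n -> Prop) :
  (forall x, ~ S x) -> interval_union S [::].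
Proof. by move=> S_empty x; split=> [/S_empty | []]. Qed.

Lemma preimage_prod_map n1 n1' n2 n2' (phi1 : vec n1 -> vec n1')
    (phi2 : vec n2 -> vec n2') (g1 : vec n1) (g2 : vec n2)
    (a' b' : vec (n1' + n2')) x :
  in_interval (@vzero _) (vcat g1 g2) x /\ in_interval a' b' (prod_map phi1 phi2 x) <->
  (in_interval (@vzero _) g1 (vfst x) /\
     in_interval (vfst a') (vfst b') (phi1 (vfst x))) /\
  (in_interval (@vzero _) g2 (vsnd x) /\
     in_interval (vsnd a') (vsnd b') (phi2 (vsnd x))).
Proof.
rewrite !in_interval_split /prod_map !vfst_vcat !vsnd_vcat.
by split=> [[[? ?] [? ?]] | [[? ?] [? ?]]].
Qed.

Theorem lemma3p4 (n1 n1' n2 n2' : nat)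
  (phi1 : vec n1 -> vec n1') (phi2 : vec n2 -> vec n2')
  (l1 l2 : int) (g1 : vec n1) (g1' : vec n1') (g2 : vec n2) (g2' : vec n2') :
  monotonic phi1 -> monotonic phi2 ->
  changes_sdepth phi1 l1 g1 g1' ->
  changes_sdepth phi2 l2 g2 g2' ->
  changes_sdepth (prod_map phi1 phi2) (l1 + l2)%R (vcat g1 g2) (vcat g1' g2').
Proof.
move=> _ _ [le_g1 sdepth1] [le_g2 sdepth2]; split.
  by apply/vle_split; rewrite /prod_map !vfst_vcat !vsnd_vcat.
move=> a' b' sub_ab.
have [le_ab | /forallPn[i lt_ba]] := boolP [forall i, a' i <= b' i]; last first.
  exists [::]; split=> //; apply: interval_union_nil => x [_ [le_ax le_xb]].
  by move: lt_ba; rewrite (leq_trans (le_ax i) (le_xb i)).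
have /vle_split[le_ab1 le_ab2] : vle a' b' by move=> i; apply: (forallP le_ab).
have sub1 : forall c, in_interval (vfst a') (vfst b') c -> in_interval (@vzero _) g1' c.
  by rewrite -(vfst_vcat g1' g2'); exact: in_interval_fst_sub sub_ab.
have sub2 : forall c, in_interval (vsnd a') (vsnd b') c -> in_interval (@vzero _) g2' c.
  by rewrite -(vsnd_vcat g1' g2'); exact: in_interval_snd_sub sub_ab.
have [I1 [union1 [disj1 depth1]]] := sdepth1 _ _ sub1.
have [I2 [union2 [disj2 depth2]]] := sdepth2 _ _ sub2.
exists (interval_prod I1 I2); split; last split.
- exact: interval_union_prod (preimage_prod_map phi1 phi2 g1 g2 a' b') union1 union2.
- exact: disjoint_intervals_prod.
- rewrite nb_eq_split !vfst_vcat !vsnd_vcat PoszD addrACA.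
  exact: upper_ends_depth_ge_prod.
Qed.
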